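(* For every integer $n\geq 9$, $$\dot{\imath}_{[1,2]}(P_9\Box P_n)=\begin{cases}\left\lfloor \frac{21n+28}{10}\right\rfloor & \text{if } n\equiv 0,7 \text{ or } 9 \pmod{10},\\[2pt] \left\lfloor \frac{21n+18}{10}\right\rfloor & \text{otherwise.}\end{cases}$$
   Context: $P_k$ denotes the path on $k$ vertices and $P_m\Box P_n$ the Cartesian product of two paths (the $m\times n$ grid graph). A set $S$ of vertices of a graph $G$ is independent if no two vertices of $S$ are adjacent, and dominating if every vertex not in $S$ has at least one neighbor in $S$. An independent $[1,2]$-set of $G$ is an independent dominating set $S$ such that every vertex $v\in V(G)\setminus S$ has at least one and at most two neighbors in $S$. When $G$ has an independent $[1,2]$-set, $\dot{\imath}_{[1,2]}(G)$ denotes the minimum cardinality of an independent $[1,2]$-set of $G$ (the statement includes the existence of such a set). *)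

From mathcomp Require Import all_boot.
Set Implicit Arguments. Unset Strict Implicit. Unset Printing Implicit Defensive.

Definition path_adj (k : nat) (i j : 'I_k) : bool :=
  (i.+1 == j :> nat) || (j.+1 == i :> nat).

Definition grid_adj (m n : nat) (u v : 'I_m * 'I_n) : bool :=
  ((u.1 == v.1) && path_adj u.2 v.2) || ((u.2 == v.2) && path_adj u.1 v.1).

Definition nbhd (T : finType) (adj : rel T) (v : T) : {set T} :=
  [set u | adj v u].

Definition independent (T : finType) (adj : rel T) (S : {set T}) : bool :=
  [forall u in S, forall v in S, ~~ adj u v].

Definition indep12 (T : finType) (adj : rel T) (S : {set T}) : bool :=
  independent adj S &&
  [forall v in ~: S, (1 <= #|nbhd adj v :&: S| <= 2)].

Definition i12_eq (T : finType) (adj : rel T) (k : nat) : Prop :=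
  (exists S : {set T}, indep12 adj S /\ #|S| = k) /\
  (forall S : {set T}, indep12 adj S -> k <= #|S|).

From mathcomp Require Import all_boot zify.
Set Implicit Arguments. Unset Strict Implicit. Unset Printing Implicit Defensive.

(* A vertex set of P_m □ P_n is read as a word of n columns, each a bit sequence of length m.
   Independence and the [1,2]-condition only relate a column to its two neighbours, so the
   minimum is computed by a min-plus dynamic program over such words whose state is the pair
   (previous column, last column), ranging over the columns without two adjacent 1s.  For
   m = 9 the table after 28 columns is the table after 18 columns shifted by 21, hence the
   minimum grows by 21 with every further 10 columns; this and the values for 9 <= n <= 27
   are checked by evaluation. *)

Definition ominn (x y : option nat) : option nat :=
  match x, y with
  | Some a, Some b => Some (minn a b)
  | Some _, None => x
  | None, _ => y
  end.

Definition omin (s : seq (option nat)) : option nat := foldr ominn None s.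

Lemma omin_le s v : Some v \in s -> exists2 u, omin s = Some u & u <= v.
Proof.
elim: s => //= x s IH; rewrite inE => /orP[/eqP<- | /IH[u -> le_uv]].
  by case: (omin s) => [u|] /=; [exists (minn v u); rewrite ?geq_minl | exists v].
by case: x => [a|] /=; [exists (minn a u); rewrite ?geq_min ?le_uv ?orbT | exists u].
Qed.

Lemma omin_mem s u : omin s = Some u -> Some u \in s.
Proof.
elim: s u => //= x s IH u; rewrite inE.
case: x => [a|] /=; last exact: IH.
case: (omin s) (IH) => [b|] /= IHb [<-]; last by rewrite eqxx.
by rewrite /minn; case: ltnP => _; rewrite ?eqxx // IHb ?orbT.
Qed.

Lemma omin_shift k s : omin (map (omap (addn k)) s) = omap (addn k) (omin s).
Proof.
elim: s => //= x s ->.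
by case: x => [a|]; case: (omin s) => [b|] //=; rewrite addn_minr.
Qed.

Definition no_two_adjacent (c : bitseq) : bool :=
  all (fun i => ~~ (nth false c i && nth false c i.+1)) (iota 0 (size c)).

Definition disjoint_bits (b c : bitseq) : bool :=
  all (fun i => ~~ (nth false b i && nth false c i)) (iota 0 (size b)).

(* [dom12 a b c]: every 0 of column [b] has one or two 1s among its neighbours, [a] and [c]
   being the adjacent columns; [above] is the bit of [b] in the previous row. *)
Fixpoint dom12_from (above : bool) (a b c : bitseq) : bool :=
  match a, b, c with
  | x :: a', y :: b', z :: c' =>
      (y || (0 < x + z + above + head false b' <= 2)) && dom12_from y a' b' c'
  | _, _, _ => true
  end.

Definition dom12 (a b c : bitseq) : bool := dom12_from false a b c.

Lemma all_iota_succ (P : pred nat) k :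
  all P (iota 1 k) = all (fun i => P i.+1) (iota 0 k).
Proof. by rewrite -(addn0 1) iotaDl all_map. Qed.

Lemma dom12_fromE above a b c : size a = size b -> size c = size b ->
  dom12_from above a b c =
  all (fun i => nth false b i || (0 < nth false a i + nth false c i
         + nth false (above :: b) i + nth false b i.+1 <= 2)) (iota 0 (size b)).
Proof.
elim: b a c above => [|y b IH] [|x a] [|z c] above //= [sa] [sc].
by rewrite all_iota_succ (IH a c y sa sc).
Qed.

Definition nbrs (g : nat -> nat -> bool) i j : nat :=
  (if j is j'.+1 then g i j' else false) + g i j.+1
  + (if i is i'.+1 then g i' j else false) + g i.+1 j.

Definition ok12 (g : nat -> nat -> bool) i j : bool :=
  [&& ~~ (g i j && g i.+1 j), ~~ (g i j && g i j.+1) & g i j || (0 < nbrs g i j <= 2)].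

Definition weight (c : bitseq) : nat := count id c.

Definition cost (w : seq bitseq) : nat := sumn (map weight w).

Lemma cost_rcons w c : cost (rcons w c) = cost w + weight c.
Proof. by rewrite /cost map_rcons sumn_rcons. Qed.

Section Words.
Variable m : nat.
Local Notation blank := (nseq m false).

Definition admissible (c : bitseq) : bool := (size c == m) && no_two_adjacent c.

Definition col (w : seq bitseq) j : bitseq := nth blank w j.

Definition bits (w : seq bitseq) i j : bool := nth false (col w j) i.

Definition col_ok (a b c : bitseq) : bool := disjoint_bits b c && dom12 a b c.

(* Words are padded by empty columns, so [col (blank :: w) j] is the column left of [j]. *)
Definition sound_at (w : seq bitseq) j : bool :=
  col_ok (col (blank :: w) j) (col w j) (col w j.+1).

Definition prefix_ok (w : seq bitseq) : bool :=
  all admissible w && all (sound_at w) (iota 0 (size w).-1).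

Definition valid_word (w : seq bitseq) : bool :=
  all admissible w && all (sound_at w) (iota 0 (size w)).

Lemma sound_at_rcons w c j : j.+1 < size w -> sound_at (rcons w c) j = sound_at w j.
Proof.
move=> lt_j1w; have lt_jw := ltnW lt_j1w.
by rewrite /sound_at /col -rcons_cons !nth_rcons /= lt_j1w lt_jw ltnS (ltnW lt_jw).
Qed.

Lemma sound_at_size w c s :
  sound_at (w ++ c :: s) (size w) = col_ok (last blank w) c (head blank s).
Proof.
rewrite /sound_at /col -cat_cons !nth_cat /= ltnS leqnn ltnn ltnNge leqnSn /=.
by rewrite subnn subSnn nth0 (last_nth blank).
Qed.

Lemma iota0S k : iota 0 k.+1 = rcons (iota 0 k) k.
Proof. by rewrite -addn1 iotaD cats1. Qed.

Lemma prefix_ok_rcons2 w a c :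
  prefix_ok (rcons (rcons w a) c) =
  [&& prefix_ok (rcons w a), admissible c & col_ok (last blank w) a c].
Proof.
rewrite /prefix_ok !size_rcons !succnK iota0S !all_rcons.
have -> : sound_at (rcons (rcons w a) c) (size w) = col_ok (last blank w) a c.
  by rewrite -!cats1 -catA sound_at_size.
have -> : all (sound_at (rcons (rcons w a) c)) (iota 0 (size w)) =
          all (sound_at (rcons w a)) (iota 0 (size w)).
  by apply: eq_in_all => j; rewrite mem_iota => /andP[_ lt_jw]; rewrite sound_at_rcons ?size_rcons.
by case: (admissible c); case: (all (sound_at _) _); rewrite /= ?andbF ?andbT.
Qed.

Lemma valid_word_rcons w c :
  valid_word (rcons w c) = prefix_ok (rcons w c) && col_ok (last blank w) c blank.
Proof.
rewrite /valid_word /prefix_ok size_rcons succnK iota0S !all_rcons.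
rewrite -[in sound_at _ (size w)]cats1 sound_at_size.
by case: (col_ok _ _ _); rewrite /= ?andbF ?andbT.
Qed.

Lemma size_col w j : all (fun c => size c == m) w -> size (col w j) = m.
Proof.
move=> /(all_nthP blank) sz; rewrite /col.
have [/sz/eqP // | le_wj] := ltnP j (size w).
by rewrite nth_default ?size_nseq.
Qed.

Lemma valid_wordE w : all (fun c => size c == m) w ->
  valid_word w = all (fun j => all (ok12 (bits w) ^~ j) (iota 0 m)) (iota 0 (size w)).
Proof.
move=> sz; have szb : all (fun c => size c == m) (blank :: w) by rewrite /= size_nseq eqxx.
rewrite /valid_word -{1}(mkseq_nth blank w) /mkseq all_map -all_predI.
apply: eq_all => j /=.
rewrite /admissible /sound_at /col_ok /no_two_adjacent /disjoint_bits /dom12.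
rewrite -/(col w j) dom12_fromE ?size_col // eqxx -!all_predI.
apply: eq_all => i; rewrite /ok12 /nbrs /bits /=.
by case: j => [|j]; case: i => [|i]; rewrite /= ?nth_nseq ?if_same.
Qed.

End Words.

Lemma zip_mapr (S T U : Type) (g : T -> U) (s : seq S) (t : seq T) :
  zip s (map g t) = [seq (p.1, g p.2) | p <- zip s t].
Proof. by elim: s t => [|x s IH] [|y t] //=; rewrite IH. Qed.

(* [cs] enumerates the admissible columns; it is a parameter rather than [columns m] so that
   evaluation computes it only once. *)
Section Transfer.
Variables (m : nat) (cs : seq bitseq).
Local Notation blank := (nseq m false).

Definition table := seq (seq (option nat)).

Definition tabulate (f : bitseq -> bitseq -> option nat) : table :=
  [seq [seq f c b | b <- cs] | c <- cs].

Definition start (c b : bitseq) : option nat :=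
  if b == blank then Some (weight c) else None.

Definition relax (f : bitseq -> bitseq -> option nat) c b : option nat :=
  omin [seq if col_ok a b c then omap (addn (weight c)) (f b a) else None | a <- cs].

Definition best k : bitseq -> bitseq -> option nat := iter k relax start.

(* [extend], [step] and [answer] evaluate [relax] and the final minimum on tables; the column
   tests are only made for the few stored values that are not [None]. *)
Definition extend (row : seq (option nat)) b c : option nat :=
  if disjoint_bits b c then
    omin [seq if p.2 is Some v then (if dom12 p.1 b c then Some (weight c + v) else None)
              else None | p <- zip cs row]
  else None.

Definition step (D : table) : table := [seq [seq extend p.2 p.1 c | p <- zip cs D] | c <- cs].

Definition dp k : table := iter k step (tabulate start).

Definition answer (D : table) : option nat :=
  omin (flatten [seq [seq if p.2 is Some v then (if col_ok p.1 q.1 blank then Some v else None)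
                          else None | p <- zip cs q.2] | q <- zip cs D]).

Definition shift k (D : table) : table := map (map (omap (addn k))) D.

Lemma zip_tabulate f : zip cs (tabulate f) = [seq (c, [seq f c b | b <- cs]) | c <- cs].
Proof. by rewrite -{1}(map_id cs) zip_map. Qed.

Lemma step_tabulate f : step (tabulate f) = tabulate (relax f).
Proof.
rewrite /step zip_tabulate; apply: eq_map => c; rewrite -map_comp; apply: eq_map => b /=.
rewrite /extend /relax -{1}(map_id cs) zip_map -map_comp /col_ok.
case: (disjoint_bits b c) => /=; last by elim: (cs) => //= a s ->.
by congr omin; apply: eq_map => a /=; case: (f b a) => [v|]; case: ifP.
Qed.

Lemma dp_tabulate k : dp k = tabulate (best k).
Proof. by elim: k => //= k ->; rewrite step_tabulate. Qed.

Lemma answer_tabulate f :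
  answer (tabulate f) = omin [seq if col_ok b c blank then f c b else None | c <- cs, b <- cs].
Proof.
rewrite /answer zip_tabulate -map_comp; congr (omin (flatten _)); apply: eq_map => c /=.
rewrite -{1}(map_id cs) zip_map -map_comp; apply: eq_map => b /=.
by case: (f c b) => [v|]; case: ifP.
Qed.

Lemma extend_shift k row b c :
  extend (map (omap (addn k)) row) b c = omap (addn k) (extend row b c).
Proof.
rewrite /extend; case: ifP => // _.
rewrite zip_mapr -map_comp -omin_shift -map_comp; congr omin; apply: eq_map => -[a [x|]] //=.
by case: ifP => //= _; rewrite addnCA.
Qed.

Lemma step_shift k D : step (shift k D) = shift k (step D).
Proof.
rewrite /step /shift zip_mapr -!map_comp; apply: eq_map => c /=.
by rewrite -!map_comp; apply: eq_map => -[b row] /=; rewrite extend_shift.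
Qed.

Lemma answer_shift k D : answer (shift k D) = omap (addn k) (answer D).
Proof.
rewrite /answer -omin_shift map_flatten zip_mapr -!map_comp; congr (omin (flatten _)).
apply: eq_map => -[c row] /=; rewrite zip_mapr -!map_comp; apply: eq_map => -[b [x|]] //=.
by case: ifP.
Qed.

Lemma dp_periodic p k s :
  dp (k + p) = shift s (dp k) -> forall j, dp (j + k + p) = shift s (dp (j + k)).
Proof.
move=> period j; have dpD q : dp (j + q) = iter j step (dp q) by rewrite /dp iterD.
rewrite -addnA !dpD period {dpD}.
by elim: j => //= j ->; rewrite step_shift.
Qed.

Hypothesis mem_cs : forall c, (c \in cs) = admissible m c.

Lemma last_mem w : all (admissible m) w -> last blank w \in cs.
Proof.
rewrite mem_cs; case/lastP: w => [_ | w c]; last by rewrite last_rcons all_rcons => /andP[].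
by rewrite /admissible size_nseq eqxx; apply/allP => i _; rewrite nth_nseq if_same.
Qed.

Lemma best_le w c : prefix_ok m (rcons w c) ->
  exists2 v, best (size w) c (last blank w) = Some v & v <= cost (rcons w c).
Proof.
elim/last_ind: w c => [|w a IH] c.
  by exists (weight c); rewrite /best /= /start ?eqxx // /cost /= addn0.
rewrite prefix_ok_rcons2 => /and3P[ok_wa _ ok_ac].
have [v best_v le_v] := IH a ok_wa.
have lastw : last blank w \in cs.
  by apply: last_mem; case/andP: ok_wa; rewrite all_rcons => /andP[].
rewrite size_rcons last_rcons /best iterS -/(best (size w)).
have [u -> le_u] : exists2 u, relax (best (size w)) c a = Some u & u <= weight c + v.
  by apply: omin_le; apply/mapP; exists (last blank w); rewrite ?ok_ac ?best_v.
by exists u; rewrite // cost_rcons (leq_trans le_u) // addnC leq_add2r.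
Qed.

Lemma best_sound k c b v : c \in cs -> b \in cs -> best k c b = Some v ->
  exists w, [/\ size w = k, last blank w = b, prefix_ok m (rcons w c) & cost (rcons w c) = v].
Proof.
elim: k c b v => [|k IH] c b v cc bc.
  rewrite /best /= /start; case: eqP => // -> [<-]; exists [::].
  by rewrite /prefix_ok /= -mem_cs cc /cost /= addn0.
rewrite /best iterS -/(best k) => /omin_mem /mapP [a ac].
case: ifP => // ok_abc; case best_a: (best k b a) => [u|] //= [->].
have [w [size_w last_w ok_wb cost_wb]] := IH b a u bc ac best_a.
exists (rcons w b); rewrite size_rcons size_w last_rcons prefix_ok_rcons2 ok_wb -mem_cs cc.
by rewrite last_w ok_abc cost_rcons cost_wb addnC.
Qed.

Lemma answer_le w : w != [::] -> valid_word m w ->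
  exists2 v, answer (dp (size w).-1) = Some v & v <= cost w.
Proof.
case/lastP: w => // w c _; rewrite valid_word_rcons size_rcons /= => /andP[ok_wc ok_last].
have [v best_v le_v] := best_le ok_wc.
have /andP[] := ok_wc; rewrite all_rcons => /andP[adm_c adm_w] _.
have mem_v : Some v \in
    [seq if col_ok b c' blank then best (size w) c' b else None | c' <- cs, b <- cs].
  apply/allpairsP; exists (c, last blank w); rewrite /= mem_cs adm_c last_mem //.
  by rewrite ok_last best_v.
have [u answer_u le_u] := omin_le mem_v.
by exists u; [rewrite dp_tabulate answer_tabulate | exact: leq_trans le_u le_v].
Qed.

Lemma answer_sound k v : answer (dp k) = Some v ->
  exists w, [/\ size w = k.+1, valid_word m w & cost w = v].
Proof.
rewrite dp_tabulate answer_tabulate => /omin_mem/allpairsP[[c b] [/= cc bc]].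
case: ifP => // ok_cb /esym best_v.
have [w [size_w last_w ok_wc cost_wc]] := best_sound cc bc best_v.
by exists (rcons w c); rewrite size_rcons size_w valid_word_rcons ok_wc last_w ok_cb.
Qed.

End Transfer.

Lemma all_iota0P (P : pred nat) k : reflect (forall i, i < k -> P i) (all P (iota 0 k)).
Proof.
apply: (iffP allP) => [P_k i lt_ik | P_k i]; first by apply: P_k; rewrite mem_iota.
by rewrite mem_iota => /andP[_]; apply: P_k.
Qed.

Lemma eq_ok12 (g g' : nat -> nat -> bool) : g =2 g' -> ok12 g =2 ok12 g'.
Proof. by move=> E [|i] [|j]; rewrite /ok12 /nbrs !E. Qed.

Lemma card_indicator (T : finType) (A : {set T}) : #|A| = \sum_(u : T) (u \in A : nat).
Proof. by rewrite -sum1_card big_mkcond; apply: eq_bigr => u _; case: (u \in A). Qed.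

Lemma sumn_mkseq f k : sumn (mkseq f k) = \sum_(i < k) f i.
Proof. by elim: k => [|k IH]; rewrite ?big_ord0 // mkseqS sumn_rcons IH big_ord_recr. Qed.

Section Grid.
Variables m n : nat.
Implicit Type S : {set 'I_m * 'I_n}.

Definition cell S i j : bool := [exists u in S, (u.1 == i :> nat) && (u.2 == j :> nat)].

Lemma cell_ord S (x : 'I_m) (y : 'I_n) : cell S x y = ((x, y) \in S).
Proof.
apply/existsP/idP => [[[a b] /and3P[abS /= /eqP/val_inj ea /eqP/val_inj eb]] | xyS].
  by rewrite -ea -eb.
by exists (x, y); rewrite xyS !eqxx.
Qed.

Lemma cellP S i j :
  reflect (exists x : 'I_m, exists y : 'I_n, [/\ x = i :> nat, y = j :> nat & (x, y) \in S])
          (cell S i j).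
Proof.
apply: (iffP existsP) => [[[x y] /and3P[xyS /eqP ex /eqP ey]] | [x [y [ex ey xyS]]]].
  by exists x, y.
by exists (x, y); rewrite xyS ex ey !eqxx.
Qed.

Lemma cell_out S i j : (m <= i) || (n <= j) -> cell S i j = false.
Proof.
move=> out; apply/cellP => -[x [y [ex ey _]]].
by move: out; rewrite -ex -ey (leqNgt m) (leqNgt n) !ltn_ord.
Qed.

Lemma sum_cell S i j :
  \sum_(u : 'I_m * 'I_n) ((i == u.1 :> nat) && (j == u.2 :> nat) && (u \in S)) = cell S i j.
Proof.
have [/cellP[x [y [<- <- xyS]]] | /cellP no_ij] := boolP (cell S i j).
  rewrite (bigD1 (x, y)) //= xyS !eqxx big1 // => -[a b] /=.
  by rewrite xpair_eqE -!val_eqE /= eq_sym [y == _ :> nat]eq_sym => /negPf->; rewrite ?andbF.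
apply: big1 => -[a b] _ /=; case: eqP => // ea; case: eqP => //= eb.
by case abS: ((a, b) \in S) => //; case: no_ij; exists a, b.
Qed.

Lemma sum_cell_left S i j :
  \sum_(u : 'I_m * 'I_n) ((i == u.1 :> nat) && ((nat_of_ord u.2).+1 == j) && (u \in S))
  = (if j is j'.+1 then cell S i j' else false).
Proof.
case: j => [|j]; first by apply: big1 => u _; rewrite andbF.
by rewrite -sum_cell; apply: eq_bigr => u _; rewrite eqSS [_ == j]eq_sym.
Qed.

Lemma sum_cell_up S i j :
  \sum_(u : 'I_m * 'I_n) ((j == u.2 :> nat) && ((nat_of_ord u.1).+1 == i) && (u \in S))
  = (if i is i'.+1 then cell S i' j else false).
Proof.
case: i => [|i]; first by apply: big1 => u _; rewrite andbF.
by rewrite -sum_cell; apply: eq_bigr => u _; rewrite eqSS [_ == i]eq_sym [(j == _) && _]andbC.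
Qed.

Lemma card_nbhd S (x : 'I_m) (y : 'I_n) :
  #|nbhd (@grid_adj m n) (x, y) :&: S| = nbrs (cell S) x y.
Proof.
rewrite card_indicator /nbrs -sum_cell_left -sum_cell_up -!sum_cell -!big_split /=.
apply: eq_bigr => -[a b] _; rewrite !inE /grid_adj /path_adj /= -!val_eqE /=.
by case: (_ \in S); do ![case: eqP => ?]; rewrite /=; lia.
Qed.


Lemma independentP S :
  reflect (forall i j, ~~ (cell S i j && cell S i.+1 j) && ~~ (cell S i j && cell S i j.+1))
          (independent (@grid_adj m n) S).
Proof.
apply: (iffP forall_inP) => [indep i j | ok [x y] xyS].
  apply/andP; split; apply/negP => /andP[/cellP[x [y [<- <- xyS]]] /cellP[x' [y' [ex ey x'y'S]]]];
    have /forall_inP/(_ _ x'y'S) := indep _ xyS;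
    by rewrite /grid_adj /path_adj /= -!val_eqE /= ex ey !eqxx ?orbT.
have cellT (u : 'I_m * 'I_n) : u \in S -> cell S u.1 u.2 by case: u => a b; rewrite cell_ord.
apply/forall_inP => -[x' y'] /cellT x'y'S; move/cellT: xyS => /= xyS.
rewrite /grid_adj /path_adj /= -!val_eqE /=; apply/negP.
case/orP=> /andP[/eqP ex /orP[] /eqP ey].
- by have /andP[_] := ok x y; rewrite xyS ey ex x'y'S.
- by have /andP[_] := ok x' y'; rewrite x'y'S ey -ex xyS.
- by have /andP[+ _] := ok x y; rewrite xyS ey ex x'y'S.
- by have /andP[+ _] := ok x' y'; rewrite x'y'S ey -ex xyS.
Qed.

Lemma dominated12P S :
  reflect (forall i j, i < m -> j < n -> cell S i j || (0 < nbrs (cell S) i j <= 2))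
          [forall v in ~: S, 1 <= #|nbhd (@grid_adj m n) v :&: S| <= 2].
Proof.
apply: (iffP forall_inP) => [dom i j im jn | dom [x y]].
  case ijS : (cell S i j) => //=.
  by have := dom (Ordinal im, Ordinal jn); rewrite inE -cell_ord ijS card_nbhd; apply.
rewrite inE -cell_ord card_nbhd => /negPf xyS.
by have := dom x y (ltn_ord x) (ltn_ord y); rewrite xyS.
Qed.

Lemma indep12P S :
  reflect (forall i j, i < m -> j < n -> ok12 (cell S) i j) (indep12 (@grid_adj m n) S).
Proof.
apply: (iffP andP) => [[/independentP indep /dominated12P dom] i j im jn | ok].
  by rewrite /ok12; have /andP[-> ->] := indep i j; apply: dom.
split; last by apply/dominated12P => i j im jn; case/and3P: (ok i j im jn).
apply/independentP => i j.
have [im | mi] := ltnP i m; last by rewrite cell_out ?mi.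
have [jn | nj] := ltnP j n; last by rewrite cell_out ?nj ?orbT.
by case/and3P: (ok i j im jn) => -> ->.
Qed.

Definition word_of_set S : seq bitseq := mkseq (fun j => mkseq (cell S ^~ j) m) n.

Definition set_of_word (w : seq bitseq) : {set 'I_m * 'I_n} :=
  [set u : 'I_m * 'I_n | bits m w u.1 u.2].

Lemma size_word_of_set S : size (word_of_set S) = n.
Proof. exact: size_mkseq. Qed.

Lemma word_of_set_sizes S : all (fun c => size c == m) (word_of_set S).
Proof. by apply/allP => c /mapP[j _ ->]; rewrite size_mkseq. Qed.

Lemma bits_word_of_set S : bits m (word_of_set S) =2 cell S.
Proof.
move=> i j; rewrite /bits /col /word_of_set.
have [jn | nj] := ltnP j n; last first.
  by rewrite cell_out ?nj ?orbT // [nth _ (mkseq _ n) _]nth_default ?size_mkseq // nth_nseq if_same.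
rewrite nth_mkseq //; have [im | mi] := ltnP i m; first by rewrite nth_mkseq.
by rewrite nth_default ?size_mkseq // cell_out ?mi.
Qed.

Lemma card_word_of_set S : #|S| = cost (word_of_set S).
Proof.
transitivity (\sum_(y < n) \sum_(x < m) ((x, y) \in S : nat)).
  by rewrite card_indicator exchange_big pair_big; apply: eq_bigr => -[].
rewrite /cost /word_of_set /mkseq -map_comp -/(mkseq _ n) sumn_mkseq; apply: eq_bigr => y _.
rewrite /= /weight -sumn_count /mkseq -map_comp -/(mkseq _ m) sumn_mkseq.
by apply: eq_bigr => x _; rewrite /= cell_ord.
Qed.

Lemma cell_set_of_word w : size w = n -> all (fun c => size c == m) w ->
  cell (set_of_word w) =2 bits m w.
Proof.
move=> size_w sizes_w i j; have [im | mi] := ltnP i m; last first.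
  by rewrite cell_out ?mi // /bits nth_default // size_col.
have [jn | nj] := ltnP j n; last first.
  by rewrite cell_out ?nj ?orbT // /bits /col [nth _ w j]nth_default ?size_w // nth_nseq if_same.
by rewrite (cell_ord _ (Ordinal im) (Ordinal jn)) inE.
Qed.

Lemma word_of_setK w : size w = n -> all (fun c => size c == m) w ->
  word_of_set (set_of_word w) = w.
Proof.
move=> size_w sizes_w; apply: (@eq_from_nth _ (nseq m false)).
  by rewrite size_mkseq size_w.
move=> j jn; rewrite size_mkseq in jn.
rewrite nth_mkseq //; apply: (@eq_from_nth _ false).
  by rewrite size_mkseq -/(col m w j) size_col.
move=> i; rewrite size_mkseq => im.
by rewrite nth_mkseq // cell_set_of_word.
Qed.

Lemma indep12_word_of_set S : indep12 (@grid_adj m n) S = valid_word m (word_of_set S).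
Proof.
rewrite valid_wordE ?word_of_set_sizes // size_word_of_set.
apply/indep12P/all_iota0P => [ok j jn | ok i j im jn].
  by apply/all_iota0P => i im; rewrite (eq_ok12 (bits_word_of_set S)) ok.
by move/all_iota0P: (ok j jn) => /(_ i im); rewrite (eq_ok12 (bits_word_of_set S)).
Qed.

End Grid.

Theorem i12_eq_answer m cs n v :
  (forall c, (c \in cs) = admissible m c) -> answer m cs (dp m cs n) = Some v ->
  i12_eq (@grid_adj m n.+1) v.
Proof.
move=> mem_cs answer_v; split.
  have [w [size_w valid_w cost_w]] := answer_sound mem_cs answer_v.
  have sizes_w : all (fun c => size c == m) w.
    by case/andP: valid_w => adm_w _; apply: sub_all adm_w => c /andP[].
  exists (set_of_word m n.+1 w).
  by rewrite indep12_word_of_set card_word_of_set word_of_setK.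
move=> S indep_S; rewrite card_word_of_set.
have nonempty : word_of_set S != [::] by rewrite -size_eq0 size_word_of_set.
have valid_S : valid_word m (word_of_set S) by rewrite -indep12_word_of_set.
have [u] := answer_le mem_cs nonempty valid_S.
by rewrite size_word_of_set answer_v => -[->].
Qed.

Fixpoint bitseqs k : seq bitseq :=
  if k is k'.+1 then [seq x :: s | x <- [:: false; true], s <- bitseqs k'] else [:: [::]].

Definition columns m : seq bitseq := filter no_two_adjacent (bitseqs m).

Lemma mem_bitseqs k s : (s \in bitseqs k) = (size s == k).
Proof.
elim: k s => [|k IH] [|x s] //; first by apply/allpairsP => -[[y t] [_ _]].
apply/allpairsP/idP => [[[y t] [_ t_k [_ ->]]] | size_s]; first by rewrite /= eqSS -IH.
by exists (x, s); split; rewrite // ?IH //; case: x {size_s}.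
Qed.

Lemma mem_columns m c : (c \in columns m) = admissible m c.
Proof. by rewrite mem_filter mem_bitseqs andbC. Qed.

Definition i12_grid9 n : nat :=
  if (n %% 10 == 0) || (n %% 10 == 7) || (n %% 10 == 9)
  then (21 * n + 28) %/ 10 else (21 * n + 18) %/ 10.

Lemma i12_grid9D10 n : i12_grid9 (n + 10) = i12_grid9 n + 21.
Proof.
have divD c : (21 * (n + 10) + c) %/ 10 = (21 * n + c) %/ 10 + 21.
  by rewrite mulnDr addnAC addnC divnMDl // addnC.
by rewrite /i12_grid9 modnDr !divD; case: (_ || _ || _).
Qed.

Definition grid9_tables : seq table :=
  traject (step (columns 9)) (tabulate (columns 9) (start 9)) 28.

Definition grid9_facts (T : seq table) : bool :=
  all (fun n => answer 9 (columns 9) (nth [::] T n.-1) == Some (i12_grid9 n)) (iota 9 19)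
  && (nth [::] T 27 == shift 21 (nth [::] T 17)).

Lemma grid9_computation : grid9_facts grid9_tables.
Proof. vm_cast_no_check (erefl true). Qed.

Lemma grid9_tablesE k : k < 28 -> nth [::] grid9_tables k = dp 9 (columns 9) k.
Proof.
move=> lt_k28; rewrite (set_nth_default (tabulate (columns 9) (start 9))) ?size_traject //.
exact: nth_traject.
Qed.

Lemma answer_dp9_small n : 9 <= n <= 27 ->
  answer 9 (columns 9) (dp 9 (columns 9) n.-1) = Some (i12_grid9 n).
Proof.
case/andP: grid9_computation => /allP small _ /andP[n9 n27].
have lt_n28 : n.-1 < 28 by apply: leq_ltn_trans (leq_pred n) _.
by apply/eqP; rewrite -grid9_tablesE // small // mem_iota n9.
Qed.

Lemma dp9_period : dp 9 (columns 9) (17 + 10) = shift 21 (dp 9 (columns 9) 17).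
Proof. by case/andP: grid9_computation => _ /eqP; rewrite !grid9_tablesE. Qed.

Lemma answer_dp9 n : 9 <= n ->
  answer 9 (columns 9) (dp 9 (columns 9) n.-1) = Some (i12_grid9 n).
Proof.
elim/ltn_ind: n => n IH n9; have [n27 | lt27n] := leqP n 27.
  by apply: answer_dp9_small; rewrite n9.
have [j def_n] : exists j, n = j + 18 + 10 by exists (n - 28); rewrite -addnA subnK.
subst n.
have IHj : answer 9 (columns 9) (dp 9 (columns 9) (j + 17)) = Some (i12_grid9 (j + 18)).
  by move: (IH (j + 18)); rewrite addnS /=; apply; lia.
have -> : (j + 18 + 10).-1 = j + 17 + 10 by lia.
by rewrite (dp_periodic dp9_period) answer_shift IHj i12_grid9D10 /= addnC.
Qed.

Theorem mainTheorem10 (n : nat) (hn : 9 <= n) :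
  i12_eq (@grid_adj 9 n)
    (if (n %% 10 == 0) || (n %% 10 == 7) || (n %% 10 == 9)
     then (21 * n + 28) %/ 10
     else (21 * n + 18) %/ 10).
Proof.
case: n hn => // n hn.
exact: i12_eq_answer (mem_columns 9) (answer_dp9 hn).
Qed.
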